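(* Let $d \geq 1$ and let $\mathbb{P}$ be a probability measure on $\Omega = \mathbb{R}^{\mathcal{E}^d}$ satisfying assumptions A1 and A2 below. For $x \in \mathbb{Z}^d$, let $C_x$ be the subgraph of the directed nearest neighbor graph $\mathcal{N}_D$ induced by the vertices $y$ such that $y \to x$ in $\mathcal{N}_D$. Then $\mathbb{P}$-almost surely, $C_x$ is finite for all $x \in \mathbb{Z}^d$.
   Context: $\mathcal{E}^d$ is the set of nearest-neighbor edges $\{x,y\}$ ($\|x-y\|_1=1$) of $\mathbb{Z}^d$. $\Omega=\mathbb{R}^{\mathcal{E}^d}$ carries the product Borel sigma-algebra; $\omega\in\Omega$ assigns a weight $\omega(e)$ to each edge. Assumption A1 (translation invariance): for every $z\in\mathbb{Z}^d$, $\mathbb{P}=\mathbb{P}\circ T_z^{-1}$, where $(T_z\omega)(e)=\omega(e+z)$ and $e+z=\{x+z,y+z\}$ for $e=\{x,y\}$. Assumption A2: for any distinct $e,f\in\mathcal{E}^d$, $\mathbb{P}(\omega(e)=\omega(f))=0$. The directed nearest neighbor graph $\mathcal{N}_D$ has vertex set $\mathbb{Z}^d$ and directed edges $\langle x,y\rangle$ for all $\{x,y\}\in\mathcal{E}^d$ with $\omega(\{x,y\})\le\omega(\{x,z\})$ for all $z$ with $\{x,z\}\in\mathcal{E}^d$ (each vertex points to the neighbor(s) minimizing the weight). For vertices $x,y$ of a directed graph, $x\to y$ means there is a directed path from $x$ to $y$; by convention $x\to x$. *)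

From HB Require Import structures.
From mathcomp Require Import all_boot all_order all_algebra.
From mathcomp Require Import all_classical all_reals all_analysis.
Set Implicit Arguments. Unset Strict Implicit. Unset Printing Implicit Defensive.
Import Order.TTheory GRing.Theory Num.Theory.
Local Open Scope ring_scope.
Local Open Scope classical_set_scope.

Definition Zd (d : nat) := 'rV[int]_d.

Definition unitv (d : nat) (i : 'I_d) : Zd d := delta_mx 0 i.

(* Nearest-neighbour edges of Z^d: the pair (x, i) encodes the edge
   {x, x + e_i}; this is a bijection onto E^d. *)
Definition Edge (d : nat) := (Zd d * 'I_d)%type.

Definition Config (R : realType) (d : nat) := Edge d -> R.
HB.instance Definition _ (R : realType) (d : nat) := gen_eqMixin (Config R d).
HB.instance Definition _ (R : realType) (d : nat) := gen_choiceMixin (Config R d).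
HB.instance Definition _ (R : realType) (d : nat) :=
  isPointed.Build (Config R d) (fun _ => 0).

(* Generators of the product Borel sigma-algebra: cylinder sets
   {omega | omega(e) in B}, B Borel. *)
Definition cyl_sets (R : realType) (d : nat) : set (set (Config R d)) :=
  [set A | exists (e : Edge d) (B : set R), measurable B /\
                                         A = (fun w => w e) @^-1` B].

Notation Omega R d := (g_sigma_algebraType (@cyl_sets R d)).

Definition transl (R : realType) (d : nat) (z : Zd d) (w : Config R d) : Config R d :=
  fun e => w (e.1 + z, e.2).

Definition nbr (d : nat) (x : Zd d) (i : 'I_d) (b : bool) : Zd d :=
  if b then x + unitv i else x - unitv i.

(* weight of the edge {x, nbr x i b} *)
Definition wt (R : realType) (d : nat) (w : Config R d) (x : Zd d) (i : 'I_d)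
    (b : bool) : R :=
  if b then w (x, i) else w (x - unitv i, i).

Definition ND_edge (R : realType) (d : nat) (w : Config R d) (x y : Zd d) : Prop :=
  exists (i : 'I_d) (b : bool), y = nbr x i b /\
    forall (j : 'I_d) (c : bool), wt w x i b <= wt w x j c.

Inductive reaches (R : realType) (d : nat) (w : Config R d) : Zd d -> Zd d -> Prop :=
  | reaches_refl x : reaches w x x
  | reaches_step x y z : ND_edge w x y -> reaches w y z -> reaches w x z.

Definition Cx (R : realType) (d : nat) (w : Config R d) (x : Zd d) : set (Zd d) :=
  [set y | reaches w y x].

From HB Require Import structures.
From mathcomp Require Import all_boot all_order all_algebra.
From mathcomp Require Import all_classical all_reals all_analysis.
From mathcomp Require Import zify lra measurable_realfun.
Import Order.TTheory GRing.Theory Num.Theory.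
Local Open Scope ring_scope.
Local Open Scope classical_set_scope.
Set Implicit Arguments. Unset Strict Implicit. Unset Printing Implicit Defensive.

(* For generic (injective) weights every vertex has exactly one out-edge, and the
   minimal edge weight at a vertex does not increase along directed paths.  If
   [C_x] is infinite, pick a rational level [r] just above the minimal weight at
   [x]: a path into [x] can only drop below [r] through the two endpoints [y] of
   the minimal edge at [x], so one of them has infinitely many vertices reaching
   it through vertices of minimal weight [>= r] (an unbounded [r]-basin).  The
   [r]-basins of distinct vertices of minimal weight [< r] are disjoint, so in the
   box of radius [n] the vertices with an unbounded basin inject into the next
   layer of the box.  Translation invariance turns this into
   [(1 + p) (2n+1)^d <= (2n+3)^d] for the probability [p] that the origin has an
   unbounded [r]-basin, whence [p = 0]; a countable union over [r] and the
   translates finishes the proof. *)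

Lemma exists_rat_gap (R : realType) (I : finType) (f : I -> R) (a : R) :
  exists r : rat, a < ratr r /\ forall i, f i < ratr r -> f i <= a.
Proof.
pose m := (\big[Order.min/a + 1]_(i | a < f i) f i)%O.
have am : a < m by apply: lt_bigmin => //; rewrite ltrDl.
have [r] := rat_in_itvoo am; rewrite in_itv /= => /andP [ar rm].
exists r; split=> // i fir; rewrite leNgt; apply/negP => afi.
have := lt_trans fir rm; rewrite ltNge => /negP; apply.
exact: (@bigmin_le_cond _ _ _ _ i).
Qed.

Lemma subrXX_le (R : realDomainType) (a b : R) n : 0 <= b <= a ->
  a ^+ n.+1 - b ^+ n.+1 <= (a - b) * (n.+1%:R * a ^+ n).
Proof.
move=> /andP [b0 ba]; have a0 := le_trans b0 ba.
rewrite subrXX; apply: ler_wpM2l; first by rewrite subr_ge0.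
apply: (@le_trans _ _ (\sum_(i < n.+1) a ^+ n)); last first.
  by rewrite sumr_const card_ord mulr_natl.
apply: ler_sum => i _ /=.
have -> : a ^+ n = a ^+ (n - i) * a ^+ i by rewrite -exprD subnK // -ltnS.
by apply: ler_wpM2l; [exact: exprn_ge0 | exact: lerXn2r].
Qed.

Lemma odd_pow_ratio_le0 (R : archiRealFieldType) (p : R) (d : nat) :
  (forall n : nat, (1 + p) * (n.*2.+1)%:R ^+ d <= (n.*2.+3)%:R ^+ d) -> p <= 0.
Proof.
case: d => [|m] grow; first by have := grow 0%N; rewrite !expr0 mulr1 gerDl.
pose C : R := 2 * (m.+1%:R * 3 ^+ m).
have bounded n : p * (n.*2.+1)%:R <= C.
  set a : R := (n.*2.+1)%:R.
  have a1 : 1 <= a by rewrite ler1n.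
  have a0 : 0 < a ^+ m by apply: exprn_gt0; lra.
  have a2 : (n.*2.+3)%:R = a + 2 :> R by rewrite /a -natrD addn2.
  have growth : p * a ^+ m.+1 <= (a + 2) ^+ m.+1 - a ^+ m.+1.
    by have := grow n; rewrite a2 -/a; lra.
  have le2 : (a + 2) ^+ m.+1 - a ^+ m.+1 <= 2 * (m.+1%:R * (a + 2) ^+ m).
    by have := @subrXX_le _ (a + 2) a m; rewrite [a + 2 - a]addrC addKr; apply; lra.
  have le3 : (a + 2) ^+ m <= 3 ^+ m * a ^+ m.
    by rewrite -exprMn; apply: lerXn2r; rewrite ?nnegrE; lra.
  rewrite -(ler_pM2r a0) -mulrA -exprS; apply: le_trans (le_trans growth le2) _.
  by rewrite /C -!mulrA; do 2!apply: ler_wpM2l => //.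
rewrite leNgt; apply/negP => p_gt0.
have C_ge0 : 0 <= C by rewrite /C; apply: mulr_ge0 => //; apply: mulr_ge0.
have := archi_boundP (divr_ge0 C_ge0 (ltW p_gt0)); set N := Num.bound _.
rewrite ltr_pdivrMr // => lt_N.
have le_N : N%:R <= (N.*2.+1)%:R :> R by rewrite ler_nat -addnn; lia.
have := bounded N; rewrite leNgt => /negP; apply; apply: lt_le_trans lt_N _.
by rewrite mulrC ler_wpM2l // ltW.
Qed.

Section MeasurableSets.
Context (disp : measure_display) (T : measurableType disp).

Lemma measurable_prop (Pr : Prop) : measurable [set _ : T | Pr].
Proof.
have [p | np] := pselect Pr.
  by rewrite (_ : [set _ | Pr] = setT) //; apply/seteqP; split.
by rewrite (_ : [set _ | Pr] = set0) //; apply/seteqP; split=> // t /np.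
Qed.

Lemma measurable_exists (I : countType) (F : I -> set T) :
  (forall i, measurable (F i)) -> measurable [set t | exists i, F i t].
Proof.
move=> mF; rewrite (_ : [set t | _] = \bigcup_i F i).
  exact: countable_bigcupT_measurable (countableP _) mF.
by apply/seteqP; split=> t [i]; exists i.
Qed.

Lemma measurable_forall (I : countType) (F : I -> set T) :
  (forall i, measurable (F i)) -> measurable [set t | forall i, F i t].
Proof.
move=> mF; rewrite (_ : [set t | _] = ~` [set t | exists i, ~ F i t]).
  by apply/measurableC/measurable_exists => i; exact/measurableC.
apply/seteqP; split=> t /=; first by move=> Ft [i]; apply.
by move=> nF i; apply: contrapT => nFi; apply: nF; exists i.
Qed.

Lemma measurable_bool (b : T -> bool) :
  measurable_fun setT b -> measurable [set t | b t].
Proof. by move=> mb; rewrite -[X in measurable X]setTI; exact: mb. Qed.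

Variable R : realType.
Implicit Types f g : T -> R.

Lemma measurable_ler f g : measurable_fun setT f -> measurable_fun setT g ->
  measurable [set t | f t <= g t].
Proof. by move=> mf mg; apply/measurable_bool/measurable_fun_ler. Qed.

Lemma measurable_ltr f g : measurable_fun setT f -> measurable_fun setT g ->
  measurable [set t | f t < g t].
Proof. by move=> mf mg; apply/measurable_bool/measurable_fun_ltr. Qed.

Lemma measurable_eqr f g : measurable_fun setT f -> measurable_fun setT g ->
  measurable [set t | f t = g t].
Proof.
move=> mf mg; rewrite (_ : [set t | _] = [set t | f t == g t]).
  by apply/measurable_bool/measurable_fun_eqr.
by apply/seteqP; split=> t /eqP.
Qed.
End MeasurableSets.

Lemma negligible_exists (disp : measure_display) (T : measurableType disp)
    (R : realType) (mu : {measure set T -> \bar R}) (I : countType) (F : I -> set T) :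
  (forall i, mu.-negligible (F i)) -> mu.-negligible [set t | exists i, F i t].
Proof.
move=> nF; pose G n := if @unpickle I n is Some i then F i else set0.
apply: (@negligibleS _ _ _ _ (\bigcup_n G n)).
  by move=> t [i Fi]; exists (pickle i) => //; rewrite /G pickleK.
apply: negligible_bigcup => n; rewrite /G.
by case: unpickle => [i|]; [exact: nF | exact: negligible_set0].
Qed.

Section SumIndicators.
Local Open Scope ereal_scope.

Lemma sum_probability_le_card (disp : measure_display) (T : measurableType disp)
    (R : realType) (P : probability T R) (I : finType) (A : pred I) (E : I -> set T)
    (K : nat) :
  (forall k, measurable (E k)) ->
  (forall t, #|[pred k | (k \in A) && (t \in E k)]| <= K)%N ->
  \sum_(k in A) P (E k) <= (K%:R : R)%:E.
Proof.
move=> mE cover_le.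
have m1E k : measurable_fun setT (EFin \o (\1_(E k) : T -> R)).
  by apply/measurable_EFinP; exact: measurable_indic.
rewrite (eq_bigr (fun k => \int[P]_(t in setT) (\1_(E k) t)%:E)); last first.
  by move=> k _; rewrite integral_indic // setIT.
have indic_ge0 k t : setT t -> 0 <= (\1_(E k) t : R)%:E by rewrite lee_fin.
rewrite -big_enum /= -(@ge0_integral_sum _ _ _ P setT measurableT _
  (fun k t => (\1_(E k) t)%:E) m1E indic_ge0).
apply: (@le_trans _ _ (\int[P]_(t in setT) (cst (K%:R : R)%:E t))).
  apply: ge0_le_integral => //.
  - by move=> t _; apply: sume_ge0 => k _; rewrite lee_fin.
  - by apply: emeasurable_sum => k; exact: m1E.
  move=> t _; rewrite big_enum sumEFin lee_fin /=.
  under eq_bigr do rewrite indicE.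
  rewrite -natr_sum ler_nat; apply: leq_trans (cover_le t).
  rewrite -sum1_card big_mkcond /= [X in (_ <= X)%N]big_mkcond /=.
  by apply: leq_sum => k _; rewrite !inE; case: (k \in A).
rewrite integral_cst // -[X in _ <= X]mule1.
by apply: lee_wpmul2l; [rewrite lee_fin | exact: probability_le1].
Qed.
End SumIndicators.

Section Lattice.
Variable d : nat.
Implicit Types (x y : Zd d) (i j : 'I_d) (b c : bool).

Lemma unitv_neq0 i : unitv i != 0.
Proof.
apply/eqP => /matrixP /(_ 0 i); rewrite /unitv !mxE !eqxx /=.
by move/eqP; rewrite oner_eq0.
Qed.

Lemma nbr_neq x i b : nbr x i b != x.
Proof.
rewrite -subr_eq0 /nbr; case: b; rewrite addrAC subrr add0r ?oppr_eq0;
exact: unitv_neq0.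
Qed.

Lemma nbrK x i b : nbr (nbr x i b) i (~~ b) = x.
Proof. by case: b; rewrite /nbr /= ?addrK ?subrK. Qed.

Definition edge x i b : Edge d := if b then (x, i) else (x - unitv i, i).

Lemma wt_edge (R : realType) (w : Config R d) x i b : wt w x i b = w (edge x i b).
Proof. by case: b. Qed.

Lemma edge_nbr x i b : edge (nbr x i b) i (~~ b) = edge x i b.
Proof. by case: b; rewrite /edge /nbr /= ?addrK. Qed.

Lemma edge_eq x y i j b c : edge x i b = edge y j c ->
  j = i /\ (y = x /\ c = b \/ y = nbr x i b /\ c = ~~ b).
Proof.
case: b; case: c => -[e ij]; subst j; split=> //.
- by left.
- by right; rewrite /nbr e subrK.
- by right; rewrite /nbr e.
- by left; rewrite -[y](subrK (unitv i)) -e subrK.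
Qed.

Lemma edge_inj x i j b c : edge x i b = edge x j c -> j = i /\ c = b.
Proof.
move=> /edge_eq [-> [[_ ->] | [/esym/eqP]]] //.
by rewrite (negbTE (nbr_neq _ _ _)).
Qed.

Definition inbox (N : nat) x : bool := [forall i, absz (x ord0 i) <= N]%N.

Lemma inboxD m n x y : inbox m x -> inbox n y -> inbox (m + n) (x + y).
Proof.
move=> /forallP hx /forallP hy; apply/forallP => i; rewrite mxE.
by move: (hx i) (hy i); move: (x ord0 i) (y ord0 i) => a b; lia.
Qed.

Lemma exists_inbox x : exists N, inbox N x.
Proof.
exists (\max_i absz (x ord0 i))%N; apply/forallP => i.
exact: leq_bigmax.
Qed.

Lemma inbox_nbr n x i b : inbox n (nbr x i b) -> inbox n.+1 x.
Proof.
move=> /forallP h; apply/forallP => j; move: {h}(h j).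
by rewrite /nbr /unitv; case: b; rewrite !mxE /=; case: (i == j) => /=; lia.
Qed.

Definition box_index (N : nat) := {ffun 'I_d -> 'I_(N.*2.+1)}.

Definition box_pt N (k : box_index N) : Zd d := \row_i ((k i)%:Z - N%:Z).

Lemma box_pt_inj N : injective (@box_pt N).
Proof.
move=> k1 k2 /matrixP h; apply/ffunP => i; have := h 0 i; rewrite !mxE.
by move/addIr => [] /val_inj.
Qed.

Lemma inbox_box_pt N (k : box_index N) : inbox N (box_pt k).
Proof. by apply/forallP => i; rewrite mxE; have := ltn_ord (k i); lia. Qed.

Lemma box_ptP N x : inbox N x -> exists k : box_index N, box_pt k = x.
Proof.
move=> /forallP hx.
have hk i : (absz (x ord0 i + N%:Z)%R < N.*2.+1)%N by have := hx i; lia.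
exists [ffun i => Ordinal (hk i)]; apply/matrixP => a i.
rewrite !mxE ffunE /= (ord1 a).
by have := hx i; rewrite (_ : ord0 = 0) //; lia.
Qed.

Lemma box_finite N : finite_set [set x | inbox N x].
Proof.
apply: (@sub_finite_set _ _ (@box_pt N @` setT)).
  by move=> x /box_ptP [k <-]; exists k.
exact: finite_image finite_finset.
Qed.

Lemma card_box_index N : #|box_index N| = ((N.*2.+1) ^ d)%N.
Proof. by rewrite card_ffun !card_ord. Qed.

Lemma card_inner_box n :
  ((n.*2.+1) ^ d <= #|[pred k : box_index n.+1 | inbox n (box_pt k)]|)%N.
Proof.
pose shift (k : box_index n) : box_index n.+1 := [ffun i => inord (k i).+1].
have shiftE k : box_pt (shift k) = box_pt k.
  apply/matrixP => a i; rewrite !mxE ffunE inordK /=; first lia.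
  by have := ltn_ord (k i); rewrite doubleS; lia.
have shift_inj : injective shift.
  by move=> k1 k2 e; apply: box_pt_inj; rewrite -shiftE e shiftE.
have <- : #|shift @: [set: box_index n]%SET| = ((n.*2.+1) ^ d)%N.
  by rewrite (card_imset _ shift_inj) cardsT card_box_index.
apply: subset_leq_card; apply/fintype.subsetP => _ /imsetP [k _ ->].
by rewrite inE shiftE inbox_box_pt.
Qed.

End Lattice.

Section Descent.
Variables (R : realType) (d : nat) (i0 : 'I_d).
Implicit Types (w : Config R d) (x y z : Zd d) (q : R).

Definition argmin_dir w x : 'I_d * bool :=
  [arg min_(p < (i0, true)) wt w x p.1 p.2]%O.

Definition minwt w x := wt w x (argmin_dir w x).1 (argmin_dir w x).2.

Definition descend w x := nbr x (argmin_dir w x).1 (argmin_dir w x).2.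

Definition minedge w x := edge x (argmin_dir w x).1 (argmin_dir w x).2.

Lemma minwt_le w x i b : minwt w x <= wt w x i b.
Proof.
by rewrite /minwt /argmin_dir; case: arg_minP => //= p _ min_p; exact: (min_p (i, b)).
Qed.

Lemma ND_edge_descend w x : ND_edge w x (descend w x).
Proof.
by exists (argmin_dir w x).1, (argmin_dir w x).2; split=> // j c; exact: minwt_le.
Qed.

Lemma ND_edgeP w x y : ND_edge w x y ->
  exists i b, y = nbr x i b /\ wt w x i b = minwt w x.
Proof.
move=> [i [b [-> min_ib]]]; exists i, b; split=> //.
by apply/eqP; rewrite eq_le min_ib minwt_le.
Qed.

Lemma minwt_ND_edge w x y : ND_edge w x y -> minwt w y <= minwt w x.
Proof.
move=> /ND_edgeP [i [b [-> <-]]].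
by rewrite !wt_edge -(edge_nbr x i b) -wt_edge minwt_le.
Qed.

Lemma minwt_reaches w x y : reaches w y x -> minwt w x <= minwt w y.
Proof. by elim=> // a b c /minwt_ND_edge ab _ /le_trans; apply. Qed.

Lemma ND_edge_descendE w x y : injective w -> ND_edge w x y -> y = descend w x.
Proof.
move=> w_inj /ND_edgeP [i [b [-> /eqP]]].
rewrite /minwt !wt_edge => /eqP /w_inj /edge_inj [e1 e2].
by rewrite /descend e1 e2.
Qed.

Lemma minedge_end w x a i b : edge a i b = minedge w x -> a = x \/ a = descend w x.
Proof. by move=> /esym /edge_eq [_ [[-> _] | [-> _]]]; [left | right]. Qed.

Inductive reaches_above w q : Zd d -> Zd d -> Prop :=
  | reaches_above_refl y : reaches_above w q y y
  | reaches_above_step x x' y : ND_edge w x x' -> q <= minwt w x ->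
      reaches_above w q x' y -> reaches_above w q x y.

Lemma reaches_split w q z x : reaches w z x -> minwt w x < q ->
  exists2 y, minwt w y < q & reaches_above w q z y /\ reaches w y x.
Proof.
elim=> [y lt_y | a b c ab bc IH lt_c].
  by exists y => //; split; constructor.
have [y lt_y [by_ yc]] := IH lt_c.
case: (ltP (minwt w a) q) => [lt_a | ge_a].
  by exists a => //; split; [constructor | exact: reaches_step ab bc].
by exists y => //; split=> //; exact: reaches_above_step ab ge_a by_.
Qed.

Lemma reaches_above_uniq w q z y1 y2 : injective w ->
  reaches_above w q z y1 -> reaches_above w q z y2 ->
  minwt w y1 < q -> minwt w y2 < q -> y1 = y2.
Proof.
move=> w_inj r1; elim: r1 y2 => [a | a a' b aa' qa _ IH] y2 r2 lt1 lt2.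
  by case: r2 lt1 {lt2} => // a0 a1 b0 _ qa _; rewrite ltNge qa.
case: r2 aa' qa IH lt2 => [a0 _ qa _ | a0 a1 b0 e0 _ r1 e1 _ IH lt2].
  by rewrite ltNge qa.
apply: IH => //.
by rewrite (ND_edge_descendE w_inj e1) -(ND_edge_descendE w_inj e0).
Qed.

(* A path into x can only enter the level set below q through [minedge w x]:
   an edge leading into {x, descend w x} below q has weight in the gap
   [minwt w x, q), hence weight [minwt w x], hence is [minedge w x]. *)
Lemma reaches_below_gap w x y q : injective w -> reaches w y x ->
  minwt w x < q ->
  (forall v i b, v = x \/ v = descend w x ->
     wt w v i b < q -> wt w v i b <= minwt w x) ->
  minwt w y < q -> y = x \/ y = descend w x.
Proof.
move=> w_inj; elim=> [c _ _ _ | a b c ab bc IH lt_c gap lt_a]; first by left.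
have lt_b : minwt w b < q := le_lt_trans (minwt_ND_edge ab) lt_a.
have b_end := IH lt_c gap lt_b.
have [i [j [bE wa]]] := ND_edgeP ab; subst b.
have wb : wt w (nbr a i j) i (~~ j) = minwt w a.
  by rewrite !wt_edge edge_nbr -wt_edge.
have le_c : minwt w c <= minwt w a.
  by rewrite -wb; apply: le_trans (minwt_reaches bc) (minwt_le _ _ _ _).
have := gap _ i (~~ j) b_end; rewrite wb => /(_ lt_a) ge_c.
apply: (@minedge_end w c a i j (w_inj _ _ _)).
rewrite -wt_edge wa /minedge -wt_edge.
by apply/eqP; rewrite eq_le ge_c le_c.
Qed.

Lemma infinite_cluster_basin w x : injective w -> ~ finite_set (Cx w x) ->
  exists r : rat, exists2 y, minwt w y < ratr r &
    ~ finite_set [set z | reaches_above w (ratr r) z y].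
Proof.
move=> w_inj Cx_inf.
pose f (p : bool * ('I_d * bool)) :=
  wt w (if p.1 then x else descend w x) p.2.1 p.2.2.
have [r [lt_x gap_f]] := exists_rat_gap f (minwt w x).
have gap v i b : v = x \/ v = descend w x ->
    wt w v i b < ratr r -> wt w v i b <= minwt w x.
  by case=> ->; [exact: (gap_f (true, (i, b))) | exact: (gap_f (false, (i, b)))].
have lt_dx : minwt w (descend w x) < ratr r.
  exact: le_lt_trans (minwt_ND_edge (ND_edge_descend w x)) lt_x.
have Cx_sub : Cx w x `<=` [set x; descend w x] `|`
    [set z | reaches_above w (ratr r) z x] `|`
    [set z | reaches_above w (ratr r) z (descend w x)].
  move=> z /reaches_split /(_ lt_x) [y lt_y [zy yx]].
  by case: (reaches_below_gap w_inj yx lt_x gap lt_y) => <-; [left; right | right].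
have [fin_x | ?] := pselect (finite_set [set z | reaches_above w (ratr r) z x]);
  last by exists r, x.
have [fin_dx | ?] := pselect (finite_set
    [set z | reaches_above w (ratr r) z (descend w x)]);
  last by exists r, (descend w x).
exfalso; apply/Cx_inf/(sub_finite_set Cx_sub).
by rewrite !finite_setU; split=> //; split=> //; exact: finite_set2.
Qed.
End Descent.

Section Basins.
Variables (R : realType) (d : nat) (i0 : 'I_d).
Implicit Types (w : Config R d) (x y z : Zd d) (q : R).
Local Notation minwt := (minwt i0).
Local Notation reaches_above := (reaches_above i0).

Lemma wt_transl y w x i b : wt (transl y w) x i b = wt w (x + y) i b.
Proof. by case: b; rewrite /wt /transl //= addrAC. Qed.

Lemma nbrD x y i b : nbr x i b + y = nbr (x + y) i b.
Proof. by case: b; rewrite /nbr addrAC. Qed.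

Lemma minwt_transl y w x : minwt (transl y w) x = minwt w (x + y).
Proof.
have argminE : argmin_dir i0 (transl y w) x = argmin_dir i0 w (x + y).
  by congr Order.arg_min; apply/funext => p; exact: wt_transl.
by rewrite /minwt argminE wt_transl.
Qed.

Lemma ND_edge_transl y w a b : ND_edge (transl y w) a b -> ND_edge w (a + y) (b + y).
Proof.
move=> [i [c [-> min_ic]]]; exists i, c; split; first exact: nbrD.
by move=> j e; rewrite -!wt_transl.
Qed.

Lemma reaches_above_transl y w q a b :
  reaches_above (transl y w) q a b -> reaches_above w q (a + y) (b + y).
Proof.
elim=> [v | u u' v uu' le_u _ IH]; first exact: reaches_above_refl.
by apply: reaches_above_step (ND_edge_transl uu') _ IH; rewrite -minwt_transl.
Qed.

Lemma translNK y w : transl (- y) (transl y w) = w.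
Proof. by apply/funext => -[a i]; rewrite /transl /= subrK. Qed.

Lemma injective_transl y w : injective w -> injective (transl y w).
Proof.
move=> w_inj [a i] [b j] /w_inj [/addIr -> ->] //.
Qed.

Definition unbounded_basin q : set (Config R d) :=
  [set w : Config R d | injective w /\ minwt w 0 < q /\
     forall N, exists z, ~~ inbox N z /\ reaches_above w q z 0].

Lemma unbounded_basin_transl w q y : injective w -> minwt w y < q ->
  ~ finite_set [set z | reaches_above w q z y] -> unbounded_basin q (transl y w).
Proof.
move=> w_inj lt_y basin_inf; split; first exact: injective_transl.
split; first by rewrite minwt_transl add0r.
move=> N; apply: contrapT => bounded; apply: basin_inf.
apply: (@sub_finite_set _ _ ((fun z => z + y) @` [set z | inbox N z])); last first.
  by apply: finite_image; exact: box_finite.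
move=> z zy; exists (z - y); last by rewrite subrK.
apply: contrapT => /negP out; apply: bounded; exists (z - y); split=> //.
have := @reaches_above_transl (- y) (transl y w) q z y.
by rewrite translNK subrr; apply.
Qed.

Lemma unbounded_basin_translE w q y : unbounded_basin q (transl y w) ->
  [/\ injective w, minwt w y < q &
     forall N, exists z, ~~ inbox N z /\ reaches_above w q z y].
Proof.
move=> [/(@injective_transl (- y)) + [lt_0 unbounded]]; rewrite translNK => w_inj.
split=> //; first by rewrite minwt_transl add0r in lt_0.
move=> N; have [M yM] := exists_inbox (- y).
have [z [zNM r]] := unbounded (N + M)%N.
exists (z + y); split; last by have := reaches_above_transl r; rewrite add0r.
by apply: contra zNM => /inboxD /(_ yM); rewrite addrK.
Qed.

Lemma reaches_above_exit w q n z y : reaches_above w q z y ->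
  inbox n y -> ~~ inbox n z ->
  exists s, [/\ reaches_above w q s y, ~~ inbox n s & inbox n.+1 s].
Proof.
elim=> [v -> // | u u' v uu' le_u r IH v_in u_out].
have [u'_in | u'_out] := boolP (inbox n u'); last exact: IH.
exists u; split=> //; first exact: reaches_above_step uu' le_u r.
by case: uu' u'_in => i [b [-> _]] /inbox_nbr.
Qed.

(* Mass transport: each point of the inner box with an unbounded basin is sent
   to the first point outside the box on a path of its basin; basins of
   distinct points are disjoint, so this map is injective. *)
Lemma unbounded_basin_count w q n :
  (#|[pred k : box_index d n.+1 | inbox n (box_pt k) &&
        `[< unbounded_basin q (transl (box_pt k) w) >]]|
    <= #|[pred k : box_index d n.+1 | ~~ inbox n (box_pt k)]|)%N.
Proof.
set A := [pred k | _ && _].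
have [k0 k0A | A0] := pickP A; last by rewrite (eq_card0 A0).
have basinE k : k \in A -> [/\ injective w, minwt w (box_pt k) < q &
    forall N, exists z, ~~ inbox N z /\ reaches_above w q z (box_pt k)].
  by rewrite inE => /andP [_ /asboolP /unbounded_basin_translE].
have [w_inj _ _] := basinE k0 k0A.
pose exit k := odflt k [pick s : box_index d n.+1 |
  ~~ inbox n (box_pt s) && `[< reaches_above w q (box_pt s) (box_pt k) >]].
have exitP k : k \in A ->
    ~~ inbox n (box_pt (exit k)) /\ reaches_above w q (box_pt (exit k)) (box_pt k).
  move=> kA; have [_ _ unbounded] := basinE k kA.
  have [z [z_out zk]] := unbounded n.
  have k_in : inbox n (box_pt k) by move: kA; rewrite inE => /andP [].
  have [s [sk s_out s_in]] := reaches_above_exit zk k_in z_out.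
  have [s' s'E] := box_ptP s_in; subst s.
  rewrite /exit; case: pickP => [s0 /andP [? /asboolP] // | /(_ s')].
  by rewrite s_out /=; case: asboolP.
have exit_inj : {in A &, injective exit}.
  move=> k1 k2 k1A k2A e; apply: box_pt_inj.
  have [_ r1] := exitP _ k1A; have [_ r2] := exitP _ k2A; rewrite e in r1.
  have [_ lt1 _] := basinE _ k1A; have [_ lt2 _] := basinE _ k2A.
  exact: reaches_above_uniq w_inj r1 r2 lt1 lt2.
rewrite -(card_in_imset exit_inj).
apply: subset_leq_card; apply/fintype.subsetP => _ /imsetP [k kA ->].
by rewrite inE (proj1 (exitP _ kA)).
Qed.
End Basins.

Section Measurability.
Variables (R : realType) (d : nat) (i0 : 'I_d).
Local Notation Omega := (Omega R d).
Local Notation minwt := (minwt i0).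
Local Notation reaches_above := (reaches_above i0).
Implicit Types (x y z : Zd d) (q : R).

Lemma measurable_coord (e : Edge d) : measurable_fun setT (fun w : Omega => w e).
Proof. by move=> _ B mB; rewrite setTI; apply: sub_sigma_algebra; exists e, B. Qed.

Lemma measurable_wt x i b : measurable_fun setT (fun w : Omega => wt w x i b).
Proof. by case: b; exact: measurable_coord. Qed.

Lemma measurable_transl y : measurable_fun setT (transl y : Omega -> Omega).
Proof.
apply: (@measurability _ _ Omega Omega _ _ (@cyl_sets R d)) => //.
move=> _ [_ [e [B [mB ->]]] <-]; rewrite setTI; apply: sub_sigma_algebra.
by exists (e.1 + y, e.2), B.
Qed.

Lemma measurable_transl_preimage y (A : set Omega) :
  measurable A -> measurable (transl y @^-1` A : set Omega).
Proof. by move=> mA; rewrite -[X in measurable X]setTI; exact: measurable_transl. Qed.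

Lemma measurable_minwt_lt x q : measurable [set w : Omega | minwt w x < q].
Proof.
rewrite (_ : [set w | _] = [set w | exists p : 'I_d * bool, wt w x p.1 p.2 < q]).
  by apply: measurable_exists => p; apply: measurable_ltr => //; exact: measurable_wt.
apply/seteqP; split=> w /=; first by exists (argmin_dir i0 w x).
by move=> [p]; exact: le_lt_trans (minwt_le _ _ _ _ _).
Qed.

Lemma measurable_minwt_ge x q : measurable [set w : Omega | q <= minwt w x].
Proof.
rewrite (_ : [set w | _] = [set w | forall p : 'I_d * bool, q <= wt w x p.1 p.2]).
  by apply: measurable_forall => p; apply: measurable_ler => //; exact: measurable_wt.
apply/seteqP; split=> w /=; last exact.
by move=> le_q p; exact: le_trans le_q (minwt_le _ _ _ _ _).
Qed.

Lemma measurable_ND_edge x y : measurable [set w : Omega | ND_edge w x y].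
Proof.
apply: measurable_exists => i; apply: measurable_exists => b.
apply: measurableI; first exact: measurable_prop.
apply: measurable_forall => j; apply: measurable_forall => c.
by apply: measurable_ler; exact: measurable_wt.
Qed.

Fixpoint reaches_above_len (n : nat) (w : Config R d) q z y : Prop :=
  if n is n'.+1 then exists z',
    ND_edge w z z' /\ q <= minwt w z /\ reaches_above_len n' w q z' y
  else z = y.

Lemma reaches_aboveP w q z y :
  reaches_above w q z y <-> exists n, reaches_above_len n w q z y.
Proof.
split; first by elim=> [v | u u' v uu' le_u _ [n r]]; [exists 0%N | exists n.+1, u'].
move=> [n]; elim: n z => [z -> | n IH z [z' [zz' [le_z r]]]]; first by constructor.
exact: reaches_above_step zz' le_z (IH _ r).
Qed.

Lemma measurable_reaches_above q z y :
  measurable [set w : Omega | reaches_above w q z y].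
Proof.
rewrite (_ : [set w | _] = [set w | exists n, reaches_above_len n w q z y]); last first.
  by apply/seteqP; split=> w /reaches_aboveP.
apply: measurable_exists => n; elim: n z => [z | n IH z]; first exact: measurable_prop.
apply: measurable_exists => z'; apply: measurableI; first exact: measurable_ND_edge.
by apply: measurableI; [exact: measurable_minwt_ge | exact: IH].
Qed.

Lemma measurable_injective : measurable [set w : Omega | injective w].
Proof.
rewrite (_ : [set w | _] =
    [set w | forall p : Edge d * Edge d, p.1 = p.2 \/ ~ (w p.1 = w p.2)]).
  apply: measurable_forall => p; apply: measurableU; first exact: measurable_prop.
  by apply/measurableC/measurable_eqr; exact: measurable_coord.
apply/seteqP; split=> w /= w_inj.
  by move=> p; have [/w_inj | ] := pselect (w p.1 = w p.2); [left | right].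
by move=> e f ef; case: (w_inj (e, f)).
Qed.

Lemma measurable_unbounded_basin q : measurable (unbounded_basin i0 q : set Omega).
Proof.
apply: measurableI; first exact: measurable_injective.
apply: measurableI; first exact: measurable_minwt_lt.
apply: measurable_forall => N; apply: measurable_exists => z.
by apply: measurableI; [exact: measurable_prop | exact: measurable_reaches_above].
Qed.
End Measurability.

Section Probability.
Variables (R : realType) (d : nat).
Local Notation Omega := (Omega R d).
Variable P : probability Omega R.

Lemma noninjective_negligible :
  (forall e f : Edge d, e <> f -> P [set w : Omega | w e = w f] = 0%E) ->
  P.-negligible (~` [set w : Omega | injective w]).
Proof.
move=> A2; apply: (@negligibleS _ _ _ _
  [set w : Omega | exists p : Edge d * Edge d, p.1 <> p.2 /\ w p.1 = w p.2]).
  move=> w /= w_ninj; apply: contrapT => no_tie; apply: w_ninj => e f wef.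
  by apply: contrapT => ef; apply: no_tie; exists (e, f).
apply: negligible_exists => -[e f] /=.
have [<- | ef] := pselect (e = f).
  by apply: (@negligibleS _ _ _ _ set0); [move=> w [] | exact: negligible_set0].
exists [set w : Omega | w e = w f]; split; last by move=> w [].
  by apply: measurable_eqr; exact: measurable_coord.
exact: A2.
Qed.

Hypothesis A1 : forall (z : Zd d) (A : set Omega),
  measurable A -> P (transl z @^-1` A) = P A.

Lemma unbounded_basin_null (i0 : 'I_d) q : P (unbounded_basin i0 q) = 0%E.
Proof.
set B := unbounded_basin i0 q.
have mB : measurable (B : set Omega) by exact: measurable_unbounded_basin.
have PB_fin : P B \is a fin_num.
  by rewrite ge0_fin_numE // (le_lt_trans (probability_le1 _ mB)) ?ltey.
set p := fine (P B); have PBE : P B = p%:E by rewrite fineK.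
suff p_le0 : p <= 0.
  by rewrite PBE; congr (_%:E); apply/le_anti; rewrite p_le0 fine_ge0.
apply: (odd_pow_ratio_le0 (d := d)) => n.
pose inner := [pred k : box_index d n.+1 | inbox n (box_pt k)].
pose outer := [pred k : box_index d n.+1 | ~~ inbox n (box_pt k)].
have mass : p *+ #|inner| <= #|outer|%:R.
  rewrite -lee_fin -sumr_const -sumEFin.
  rewrite (eq_bigr (fun k => P (transl (box_pt k) @^-1` B))); last first.
    by move=> k _; rewrite A1 // PBE.
  apply: sum_probability_le_card => [k | w]; first exact: measurable_transl_preimage.
  apply: leq_trans (unbounded_basin_count i0 w q n); apply: subset_leq_card.
  by apply/fintype.subsetP => k; rewrite !inE => /andP [->].
have inner_outer : (#|inner| + #|outer| = (n.*2.+3) ^ d)%N.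
  by rewrite (cardC inner) card_box_index doubleS.
have p_ge0 : 0 <= p by rewrite fine_ge0.
rewrite -!natrX -inner_outer natrD.
apply: (@le_trans _ _ ((1 + p) * #|inner|%:R)).
  by apply: ler_wpM2l; [lra | rewrite ler_nat card_inner_box].
by rewrite mulrDl mul1r lerD2l mulr_natr.
Qed.
End Probability.

Theorem theorem1 (R : realType) (d : nat) (hd : (0 < d)%N)
  (P : probability (Omega R d) R)
  (A1 : forall (z : Zd d) (A : set (Omega R d)),
      measurable A -> P ((@transl R d z) @^-1` A) = P A)
  (A2 : forall e f : Edge d, e <> f ->
      P [set w : Omega R d | w e = w f] = 0%E) :
  {ae P, forall w : Omega R d, forall x : Zd d, finite_set (Cx w x)}.
Proof.
pose i0 : 'I_d := Ordinal hd.
apply: (@negligibleS _ _ _ _ (~` [set w : Omega R d | injective w] `|`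
  [set w | exists t : rat * Zd d, (transl t.2 @^-1` unbounded_basin i0 (ratr t.1)) w])).
  move=> w /= /existsNP [x Cx_inf].
  have [w_inj | ] := pselect (injective w); last by left.
  have [r [y lt_y basin_inf]] := infinite_cluster_basin i0 w_inj Cx_inf.
  by right; exists (r, y); exact: unbounded_basin_transl.
apply: negligibleU; first exact: noninjective_negligible.
apply: negligible_exists => -[r y] /=.
exists (transl y @^-1` unbounded_basin i0 (ratr r)); split => //.
  exact: measurable_transl_preimage (measurable_unbounded_basin _ _).
by rewrite A1 ?unbounded_basin_null //; exact: measurable_unbounded_basin.
Qed.
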